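(* Let $G$, $Z=\langle z\rangle$, $g_1,\dots,g_{2r}$, $S$ and $\Gamma=\mathrm{Cay}(G,S)$ be as in the context. Then $\Gamma$ is a $2$-arc-transitive cover of the $2r$-dimensional hypercube $\Sigma=\mathrm{Cay}(G/Z,\{Zg_1,\dots,Zg_{2r}\})$: the normal quotient $\Gamma_Z$ of $\Gamma$ with respect to the right-multiplication action of $Z$ is isomorphic to $\Sigma$, and $\Gamma$ and $\Gamma_Z$ both have valency $2r$.
   Context: Let $r\ge1$ and $G$ an extraspecial $2$-group of order $2^{2r+1}$ (i.e. $|Z(G)|=2$, $G/Z(G)\cong\mathbb{Z}_2^{2r}$), $Z=Z(G)=\langle z\rangle$ identified with $\mathbb{F}_2$, and $G/Z$ equipped with the quadratic form $Q(Zx)=x^2$ and bilinear form $B(Zx,Zy)=[x,y]$. Assume $\{Zg_1,\dots,Zg_{2r}\}$ is a symmetric basis of $G/Z$ ($Q(Zg_i)=0$, $B(Zg_i,Zg_j)=1$ for $i\ne j$); $S=\{g_1,\dots,g_{2r}\}$; $\mathrm{Cay}(H,T)$ has vertex set $H$ and edges $\{x,tx\}$. For $N\le\mathrm{Aut}(\Gamma)$ the normal quotient $\Gamma_N$ has the $N$-orbits as vertices, two orbits adjacent iff some edge of $\Gamma$ joins them; $\Gamma$ is a cover of $\Gamma_N$ if the valencies coincide. $\Gamma$ is $2$-arc-transitive if $\mathrm{Aut}(\Gamma)$ is transitive on triples $(u,v,w)$ with $u\sim v\sim w$, $u\ne w$. *)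

From mathcomp Require Import all_boot all_fingroup all_solvable.
Set Implicit Arguments.
Unset Strict Implicit.
Unset Printing Implicit Defensive.
Local Open Scope group_scope.

(* Simple graphs are given by an adjacency relation on a finite type
   (possibly restricted to a vertex set V). *)

(* Cayley graph Cay(H,T): edges {x, t x} with t in T; here H is the whole
   group type, so y ~ x iff y = t x for some t in T. *)
Definition cay_adj (gT : finGroupType) (T : {set gT}) : rel gT :=
  fun x y => y * x^-1 \in T.

Definition is_graph_aut (T : finType) (adj : rel T) (f : {perm T}) : Prop :=
  forall x y, adj (f x) (f y) = adj x y.

Definition two_arc (T : finType) (adj : rel T) (u v w : T) : bool :=
  [&& adj u v, adj v w & u != w].

Definition two_arc_transitive (T : finType) (adj : rel T) : Prop :=
  forall u v w u' v' w', two_arc adj u v w -> two_arc adj u' v' w' ->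
    exists f : {perm T}, [/\ is_graph_aut adj f, f u = u', f v = v' & f w = w'].

Definition valency_on (T : finType) (V : {set T}) (adj : rel T) (k : nat) : Prop :=
  forall x, x \in V -> #|[set y in V | adj x y]| = k.

Definition nquot_vertices (gT : finGroupType) (N : {set gT}) : {set {set gT}} :=
  [set orbit 'R N x | x : gT].

Definition nquot_adj (T : finType) (adj : rel T) : rel {set T} :=
  fun A B => [exists x in A, exists y in B, adj x y].

Definition graph_iso_on (T1 T2 : finType) (V1 : {set T1}) (adj1 : rel T1)
    (adj2 : rel T2) : Prop :=
  exists f : T1 -> T2,
    [/\ {in V1 &, injective f}, f @: V1 = [set: T2] &
        {in V1 &, forall a b, adj2 (f a) (f b) = adj1 a b}].

From mathcomp Require Import all_boot all_fingroup all_solvable.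
Set Implicit Arguments.
Unset Strict Implicit.
Unset Printing Implicit Defensive.
Local Open Scope group_scope.

(* Since Z is central, right multiplication by Z preserves the left-invariant
   Cayley adjacency, and the normal quotient Cay(G,S)_Z is Cay(G/Z, SZ/Z); as
   the g_i are distinct modulo Z, both graphs have valency 2r.  For
   2-arc-transitivity it suffices that every permutation of the g_i extends to
   an automorphism of G, and it suffices to do so for transpositions (a b).
   With h = g_a g_b we have h^2 = z, so x |-> x h^[x,h] is an automorphism of
   G; it maps g_a to g_b, g_b to g_a z and fixes the other g_c.  Conjugation by
   u = prod_(k <> a) g_k then removes the factor z: [g_c, u] = z^(2r - 1) or
   z^(2r - 2) according as c = a or not. *)

Definition lifts_to_aut (gT : finGroupType) (I : finType) (g : I -> gT)
    (s : {perm I}) :=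
  exists al : gT -> gT,
    [/\ injective al, {morph al : x y / x * y} & forall i, al (g i) = g (s i)].

Lemma perm_two_transitive (I : finType) (i j i' j' : I) :
  i != j -> i' != j' -> exists s : {perm I}, s i = i' /\ s j = j'.
Proof.
move=> ij ij'; pose t := tperm i i'; exists (t * tperm (t j) j'); split.
  rewrite permM /t tpermL tpermD 1?eq_sym //.
  by rewrite -[X in X != _](tpermL i i') (inj_eq perm_inj).
by rewrite permM tpermL.
Qed.

Section CayleyGraph.

Variable gT : finGroupType.
Implicit Types (S : {set gT}) (x y n : gT).

Lemma cay_adjMr S x y n : cay_adj S (x * n) (y * n) = cay_adj S x y.
Proof. by rewrite /cay_adj invMg mulgA mulgK. Qed.

Lemma cay_valency S : valency_on [set: gT] (cay_adj S) #|S|.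
Proof.
move=> x _; rewrite -(card_rcoset S x); apply: eq_card => y.
by rewrite !inE mem_rcoset.
Qed.

Section Automorphisms.

Variables (I : finType) (g : I -> gT).

Lemma lifts_to_aut1 : lifts_to_aut g 1.
Proof. by exists id; split=> // i; rewrite perm1. Qed.

Lemma lifts_to_autM s t :
  lifts_to_aut g s -> lifts_to_aut g t -> lifts_to_aut g (s * t).
Proof.
move=> [al [al_inj alM alg]] [be [be_inj beM beg]]; exists (be \o al); split.
- exact: inj_comp.
- by move=> x y /=; rewrite alM beM.
- by move=> i /=; rewrite alg beg permM.
Qed.

Lemma lifts_to_aut_all :
  (forall a b, lifts_to_aut g (tperm a b)) -> forall s, lifts_to_aut g s.
Proof.
move=> liftt s; have [ts -> _] := prod_tpermP s.
elim: ts => [|t ts IHts]; first by rewrite big_nil; apply: lifts_to_aut1.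
by rewrite big_cons; apply: lifts_to_autM.
Qed.

(* The automorphism x |-> al (x u^-1) u' is a right translation composed with
   a group automorphism lifting a permutation s with s i = i', s j = j'. *)
Lemma cay_two_arc_transitive :
  (forall i, g i * g i = 1) -> (forall s, lifts_to_aut g s) ->
  two_arc_transitive (cay_adj [set g i | i : I]).
Proof.
move=> g2 lift u v w u' v' w'.
have adjP x y : cay_adj [set g i | i : I] x y -> exists i, y = g i * x.
  by case/imsetP=> i _ e; exists i; rewrite -e mulgKV.
have neq_back i j x : x != g j * (g i * x) -> i != j.
  by apply: contraNneq => <-; rewrite mulgA g2 mul1g.
case/and3P=> /adjP[i ->] /adjP[j ->] /neq_back ij.
case/and3P=> /adjP[i' ->] /adjP[j' ->] /neq_back ij'.
have [s [si sj]] := perm_two_transitive ij ij'.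
have [al [al_inj alM alg]] := lift s.
pose alm : {morphism [set: gT] >-> gT} := Morphism (in2W alM).
have al1 : al 1 = 1 := morph1 alm.
have alV x : al x^-1 = (al x)^-1 := morphV alm (in_setT x).
pose F x := al (x * u^-1) * u'.
have F_inj : injective F by move=> x y /mulIg /al_inj /mulIg.
exists (perm F_inj); rewrite !permE /F; split.
- move=> x y; rewrite /cay_adj !permE /F invMg mulgA mulgK -alV -alM.
  rewrite invMg mulgA mulgK; apply/imsetP/imsetP => [[k _ e]|[k _ e]].
    by exists (s^-1 k) => //; apply: al_inj; rewrite e alg permKV.
  by exists (s k) => //; rewrite e alg.
- by rewrite mulgV al1 mul1g.
- by rewrite mulgK alg si.
- by rewrite (mulgA (g j)) mulgK alM !alg si sj mulgA.
Qed.

End Automorphisms.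

End CayleyGraph.

Lemma valency_on_iso (T1 T2 : finType) (V : {set T1}) (adj1 : rel T1)
    (adj2 : rel T2) k :
  graph_iso_on V adj1 adj2 -> valency_on [set: T2] adj2 k -> valency_on V adj1 k.
Proof.
move=> [f [f_inj fV fadj]] val2 x Vx.
rewrite -(val2 (f x) (in_setT _)) -(card_in_imset (f := f)); last first.
  by move=> a b; rewrite !inE => /andP[Va _] /andP[Vb _]; apply: f_inj.
apply: eq_card => y'; rewrite !inE /=; apply/imsetP/idP.
  by case=> y; rewrite inE => /andP[Vy xy] ->; rewrite fadj.
have : y' \in f @: V by rewrite fV.
by case/imsetP=> y Vy -> xy; exists y => //; rewrite inE Vy -fadj.
Qed.

Section NormalQuotient.

Variables (gT : finGroupType) (N : {group gT}).
Hypothesis nsNG : N <| [set: gT].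
Implicit Types (S A : {set gT}) (x y : gT).

Let nN x : x \in 'N(N).
Proof. exact: subsetP (normal_norm nsNG) x (in_setT x). Qed.

Lemma nquot_verticesP A :
  reflect (exists x, A = x *: N) (A \in nquot_vertices N).
Proof.
by apply: (iffP imsetP) => [[x _ ->]|[x ->]]; exists x; rewrite ?orbitR.
Qed.

Lemma mem_lcoset_coset x y : (y \in x *: N) = (coset N y == coset N x).
Proof. by rewrite -norm_rlcoset //; apply/rcoset_kercosetP/eqP. Qed.

Definition nquot_coset A : coset_of N := coset N (repr A).

Lemma nquot_cosetE x : nquot_coset (x *: N) = coset N x.
Proof. by apply/eqP; rewrite -mem_lcoset_coset (mem_repr x) ?lcoset_refl. Qed.

Lemma nquot_cay_adj S x y :
  nquot_adj (cay_adj S) (x *: N) (y *: N) =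
  cay_adj (coset N @: S) (coset N x) (coset N y).
Proof.
have cosetMV u v : coset N (v * u^-1) = coset N v * (coset N u)^-1.
  by rewrite morphM ?morphV ?groupV.
rewrite /cay_adj -cosetMV; apply/existsP/imsetP.
  case=> x' /andP[xx' /existsP[y' /andP[yy' Sy'x']]].
  exists (y' * x'^-1) => //; rewrite !cosetMV.
  by move: xx' yy'; rewrite !mem_lcoset_coset => /eqP -> /eqP ->.
case=> s Ss e; exists (s^-1 * y); rewrite mem_lcoset_coset.
have -> : coset N (s^-1 * y) = coset N x.
  by rewrite morphM ?morphV ?groupV //= -e cosetMV invMg invgK mulgKV.
rewrite eqxx; apply/existsP; exists y.
by rewrite lcoset_refl invMg invgK mulgA mulgV mul1g.
Qed.

Lemma nquot_cay_iso S :
  graph_iso_on (nquot_vertices N) (nquot_adj (cay_adj S))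
               (cay_adj (coset N @: S)).
Proof.
exists nquot_coset; split.
- move=> _ _ /nquot_verticesP[x ->] /nquot_verticesP[y ->].
  by rewrite !nquot_cosetE => /eqP; rewrite -mem_lcoset_coset => /lcoset_eqP.
- apply/setP => X; rewrite in_setT; apply/imsetP; exists (repr X *: N).
    by apply/nquot_verticesP; exists (repr X).
  by rewrite nquot_cosetE coset_reprK.
- move=> _ _ /nquot_verticesP[x ->] /nquot_verticesP[y ->].
  by rewrite !nquot_cosetE nquot_cay_adj.
Qed.

Lemma independent_coset_inj (I : finType) (g : I -> gT) :
    (forall i, g i * g i = 1) ->
    (forall J : {set I}, \prod_(i in J) coset N (g i) = 1 -> J = set0) ->
  injective (fun i => coset N (g i)).
Proof.
move=> g2 indep i j e; apply/eqP; apply: contraT => ij.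
have /setP/(_ i) : [set i; j] = set0.
  apply: indep; rewrite (eq_bigr (fun=> coset N (g i))) => [|k /set2P[]->] //.
  by rewrite prodg_const cards2 ij expgS expg1 -morphM ?g2 ?morph1.
by rewrite !inE eqxx.
Qed.

End NormalQuotient.

Section CentralCommutators.

Variables (gT : finGroupType) (z : gT).
Hypotheses (cz : forall x, commute x z) (zz : z * z = 1).
Hypothesis cm : forall x y, [~ x, y] \in <[z]>.
Implicit Types x y h : gT.

Lemma expg_involution n : z ^+ n = z ^+ odd n.
Proof.
have z2 : z ^+ 2 = 1 := zz.
by rewrite -{1}(odd_double_half n) expgD -mul2n expgM z2 expg1n mulg1.
Qed.

Lemma cycle_involutionP x : x \in <[z]> -> x = 1 \/ x = z.
Proof.
by case/cycleP=> k ->; rewrite expg_involution; case: (odd k); [right | left].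
Qed.

Lemma invg_involution : z^-1 = z.
Proof. by apply/eqP; rewrite eq_invg_mul zz. Qed.

Lemma conjg_cycle x y : x \in <[z]> -> x ^ y = x.
Proof. by case/cycleP=> k ->; rewrite conjgE -(commuteX k (cz y)) mulKg. Qed.

Lemma commMg_central x y h : [~ x * y, h] = [~ x, h] * [~ y, h].
Proof. by rewrite commMgJ conjg_cycle. Qed.

Lemma commgM_central h x y : [~ h, x * y] = [~ h, x] * [~ h, y].
Proof.
rewrite commgMJ conjg_cycle //.
by case/cycleP: (cm h y) => k ->; exact/commute_sym/commuteX/cz.
Qed.

Lemma commg_neq1 x h : [~ x, h] != 1 -> [~ x, h] = z.
Proof. by case: (cycle_involutionP (cm x h)) => ->; rewrite ?eqxx. Qed.

(* Modulo <[z]> this is the symplectic transvection v |-> v + B(v, h) h. *)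
Definition transvection (h x : gT) := if [~ x, h] == 1 then x else x * h.

Lemma transvectionM h : h * h = z -> {morph transvection h : x y / x * y}.
Proof.
move=> hh x y; rewrite /transvection commMg_central.
have [ax|ax] := eqVneq [~ x, h] 1; have [ay|ay] := eqVneq [~ y, h] 1.
- by rewrite ax ay mulg1 eqxx.
- by rewrite ax mul1g (negPf ay) mulgA.
- by rewrite ay mulg1 (negPf ax) -!mulgA; move/eqP/commgP: ay => ->.
- rewrite (commg_neq1 ax) (commg_neq1 ay) zz eqxx -mulgA; congr (x * _).
  rewrite mulgA (commgC h y) -invg_comm (commg_neq1 ay) invg_involution.
  by rewrite -mulgA -(cz h) mulgA -(mulgA y) hh -mulgA zz mulg1.
Qed.

Lemma transvection_inj h : injective (transvection h).
Proof.
have commMh x : [~ x * h, h] = [~ x, h] by rewrite commMg_central commgg mulg1.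
move=> x y; rewrite /transvection.
have [ax|ax] := eqVneq [~ x, h] 1; have [ay|ay] := eqVneq [~ y, h] 1 => //.
- by move=> exy; move: ay; rewrite -commMh -exy ax eqxx.
- by move=> exy; move: ax; rewrite -commMh exy ay eqxx.
- exact: mulIg.
Qed.

Section SymmetricGenerators.

Variables (I : finType) (g : I -> gT).
Hypothesis g2 : forall i, g i * g i = 1.
Hypothesis gc : forall i j, i != j -> [~ g i, g j] = z.
Hypotheses (zn1 : z != 1) (evenI : ~~ odd #|I|).

Lemma commg_gen i j : [~ g i, g j] = if i == j then 1 else z.
Proof. by have [->|/gc] := eqVneq i j; rewrite ?commgg. Qed.

Lemma commg_gen_prod c (A : pred I) :
  [~ g c, \prod_(k in A) g k] = z ^+ #|[predD1 A & c]|.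
Proof.
rewrite (big_morph _ (commgM_central (g c)) (commg1 _)) -prodg_const.
rewrite big_mkcond [RHS]big_mkcond; apply: eq_bigr => k _.
by rewrite commg_gen !inE eq_sym; case: eqP; case: (k \in A).
Qed.

Lemma lifts_to_aut_tperm a b : lifts_to_aut g (tperm a b).
Proof.
have [<-|ab] := eqVneq a b; first by rewrite tperm1; apply: lifts_to_aut1.
pose h := g a * g b; pose u := \prod_(k in predC1 a) g k.
have gV i : (g i)^-1 = g i by apply/eqP; rewrite eq_invg_mul g2.
have hh : h * h = z by rewrite -(gc ab) /h /commg conjgE !gV !mulgA.
have commgh c : [~ g c, h] = [~ g c, g a] * [~ g c, g b] by exact: commgM_central.
have card_a : #|[predD1 predC1 a & a]| = #|I|.-1.
  by rewrite -(cardC1 a); apply: eq_card => k; rewrite !inE andbb.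
have card_c c : c != a -> #|[predD1 predC1 a & c]| = #|I|.-2.
  by move=> ca; have := cardD1 c (predC1 a); rewrite cardC1 !inE ca => ->.
have I_gt1 : 1 < #|I| by apply/card_gt1P; exists a, b.
have ua : [~ g a, u] = z.
  rewrite commg_gen_prod card_a expg_involution.
  by move: evenI I_gt1; case: #|I| => [|[|n]] //=; case: (odd n).
have uc c : c != a -> [~ g c, u] = 1.
  move=> ca; rewrite commg_gen_prod card_c // expg_involution.
  by move: evenI I_gt1; case: #|I| => [|[|n]] //=; case: (odd n).
exists (fun x => transvection h x ^ u); split.
- by move=> x y /conjg_inj /transvection_inj.
- by move=> x y /=; rewrite transvectionM // conjMg.
move=> k; rewrite /transvection commgh !commg_gen.
case: tpermP => [->|->|/eqP ka /eqP kb].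
- rewrite eqxx (negPf ab) mul1g (negPf zn1) mulgA g2 mul1g conjg_mulR.
  by rewrite uc ?mulg1 // eq_sym.
- have gbh : g b * h = g a * z.
    rewrite mulgA (commgC (g b)) commg_gen eq_sym (negPf ab) -mulgA -(cz (g b)).
    by rewrite mulgA -(mulgA (g a)) g2 mulg1.
  rewrite [b == a]eq_sym (negPf ab) eqxx mulg1 (negPf zn1) gbh conjMg.
  by rewrite conjg_mulR ua conjg_cycle ?cycle_id // -mulgA zz mulg1.
- by rewrite (negPf ka) (negPf kb) zz eqxx conjg_mulR uc ?mulg1.
Qed.

End SymmetricGenerators.

End CentralCommutators.

Lemma commg_sym_involution (gT : finGroupType) (x y z : gT) :
  [~ x, y] = z -> [~ y, x] = z -> z * z = 1.
Proof. by move=> exy eyx; rewrite -{1}eyx -invg_comm exy mulVg. Qed.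

Lemma extraspecial_cycle_center (gT : finGroupType) (z : gT) :
    extraspecial [set: gT] -> 'Z([set: gT]) = <[z]> ->
  [/\ forall x, commute x z, forall x y, [~ x, y] \in <[z]> & z != 1].
Proof.
move=> [[_ derG] primeZ] Zg; split.
- move=> x; have : z \in 'Z([set: gT]) by rewrite Zg cycle_id.
  by case/centerP=> _ /(_ x (in_setT x)) /commute_sym.
- by move=> x y; rewrite -Zg -derG derg1 mem_commg ?in_setT.
- by apply: contraTneq primeZ => z1; rewrite Zg z1 cycle1 cards1.
Qed.

Theorem theorem4p3 (gT : finGroupType) (r : nat) (z : gT)
    (g : 'I_(2 * r) -> gT) :
  (1 <= r)%N ->
  2.-group [set: gT] ->
  extraspecial [set: gT] ->
  #|[set: gT]| = (2 ^ (2 * r + 1))%N ->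
  'Z([set: gT]) = <[z]> ->
  (* symmetric basis: Q(Z g_i) = 0, B(Z g_i, Z g_j) = 1 for i <> j *)
  (forall i, g i ^+ 2 = 1) ->
  (forall i j, i != j -> [~ g i, g j] = z) ->
  (* {Z g_i} is a basis of the F_2-space G/Z: independent and spanning *)
  (forall I : {set 'I_(2 * r)},
      \prod_(i in I) coset <[z]> (g i) = 1 -> I = set0) ->
  <<[set coset <[z]> (g i) | i : 'I_(2 * r)]>> = [set: gT] / <[z]> ->
  let S := [set g i | i : 'I_(2 * r)] in
  let Gam := cay_adj S in
  let Sig := cay_adj [set coset <[z]> (g i) | i : 'I_(2 * r)] in
  [/\ two_arc_transitive Gam,
      (* Z acts by right multiplication as automorphisms of Gamma *)
      (forall n, n \in <[z]> -> forall x y, Gam (x * n) (y * n) = Gam x y),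
      graph_iso_on (nquot_vertices <[z]>) (nquot_adj Gam) Sig,
      valency_on [set: gT] Gam (2 * r) &
      valency_on (nquot_vertices <[z]>) (nquot_adj Gam) (2 * r)].
Proof.
move=> r_gt0 _ exG _ Zg gsq gc indep _ S Gam Sig.
have g2 i : g i * g i = 1 := gsq i.
have [cz cm zn1] := extraspecial_cycle_center exG Zg.
have nsZ : <[z]> <| [set: gT] by rewrite -Zg center_normal.
have /card_gt1P[i0 [i1 [_ _ i01]]] : 1 < #|'I_(2 * r)|.
  by rewrite card_ord -{1}(muln1 2) leq_mul2l r_gt0.
have zz : z * z = 1.
  by apply: commg_sym_involution (gc _ _ i01) (gc _ _ _); rewrite eq_sym.
have cosetg_inj := independent_coset_inj nsZ g2 indep.
have Sig_cay : Sig = cay_adj (coset <[z]> @: S) by rewrite /Sig -imset_comp.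
have card_coset_S : #|coset <[z]> @: S| = (2 * r)%N.
  by rewrite -imset_comp card_imset ?card_ord.
have card_S : #|S| = (2 * r)%N.
  by rewrite card_imset ?card_ord // => i j /(congr1 (coset <[z]>)) /cosetg_inj.
split.
- apply: cay_two_arc_transitive => //; apply: lifts_to_aut_all => a b.
  have evenI : ~~ odd #|'I_(2 * r)| by rewrite card_ord oddM.
  exact (lifts_to_aut_tperm cz zz cm g2 gc zn1 evenI a b).
- by move=> n _ x y; apply: cay_adjMr.
- by rewrite Sig_cay; apply: nquot_cay_iso.
- by rewrite -card_S; apply: cay_valency.
- apply: valency_on_iso (nquot_cay_iso nsZ S) _.
  by rewrite -card_coset_S; apply: cay_valency.
Qed.
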